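(* Let $H$ be a separable complex Hilbert space, $\{v_j\}_{j\in\mathbb N}$ an orthonormal basis of $H$, $\{w_j\}_{j\in\mathbb N}$ a set of unit vectors in $H$, and $N\ge1$. Let $p_N'$ be the orthogonal projection onto $H_N'=\operatorname{span}\{v_1,\dots,v_N\}$, let $\tilde{\mathcal B}_N=\{p_N'(w_1),\dots,p_N'(w_N)\}\cup\{v_j\}_{j\ge N+1}$, and let $U_N'$ be the $N\times N$ matrix with entries $\langle p_N'(w_i),p_N'(w_j)\rangle$, $1\le i,j\le N$. Assume $\{p_N'(w_1),\dots,p_N'(w_N)\}$ is a basis of $H_N'$. Then $\tilde{\mathcal B}_N$ is a Riesz basis of $H$ with optimal frame constants $$\tilde B_N=\max_{\vec c\in\mathbb C^N,\ |\vec c|\le1}\big\{\langle U_N'\vec c,\vec c\rangle+1-|\vec c|^2\big\},\qquad \tilde A_N=\min_{\vec c\in\mathbb C^N,\ |\vec c|\le1}\big\{\langle U_N'\vec c,\vec c\rangle+1-|\vec c|^2\big\}.$$ Moreover, if $\Lambda_N$ and $\lambda_N$ denote the maximum and minimum eigenvalue of $U_N'$, then $\tilde B_N=\max\{\Lambda_N,1\}$ and $\tilde A_N=\lambda_N$.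
   Context: Here $|\vec c|$ is the Euclidean norm on $\mathbb C^N$. A Riesz basis is a sequence $\{u_j\}$ such that there are $0<A\le B<\infty$ with $A\|f\|^2\le\sum_j|\langle f,u_j\rangle|^2\le B\|f\|^2$ for all $f\in H$ and $A\sum|a_j|^2\le\|\sum a_ju_j\|^2\le B\sum|a_j|^2$ for all finite coefficient sequences; its optimal frame constants are the largest such $A$ and smallest such $B$. *)

From mathcomp Require Import all_boot all_algebra.
From mathcomp Require Import all_classical all_reals all_analysis.
From mathcomp Require Import complex.
Set Implicit Arguments. Unset Strict Implicit. Unset Printing Implicit Defensive.
Import GRing.Theory Num.Theory.
Local Open Scope ring_scope.

(* Complex scalars: C = R[i] for R : realType.  The complex order is the
   partial order of the numClosedField R[i]:  x <= y  iff  y - x is real >= 0. *)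

Section Hilbert.
Context {R : realType} {V : lmodType R[i]}.
Variable ip : V -> V -> R[i].  (* inner product, linear in the first argument *)

Definition hnorm (x : V) : R := Num.sqrt (complex.Re (ip x x)).

Definition inner_product_axioms : Prop :=
  [/\ (forall (a : R[i]) (x y z : V), ip (a *: x + y) z = a * ip x z + ip y z),
      (forall x y : V, ip y x = conjc (ip x y)),
      (forall x : V, 0 <= ip x x) &
      (forall x : V, ip x x = 0 -> x = 0)].

Definition hcomplete : Prop :=
  forall u : nat -> V,
    (forall e : R, 0 < e -> exists M : nat, forall m n : nat,
        (M <= m)%N -> (M <= n)%N -> hnorm (u m - u n) < e) ->
    exists l : V, forall e : R, 0 < e -> exists M : nat, forall n : nat,
        (M <= n)%N -> hnorm (u n - l) < e.

Definition hilbert_space : Prop := inner_product_axioms /\ hcomplete.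

Definition hseparable : Prop :=
  exists d : nat -> V, forall (x : V) (e : R), 0 < e ->
    exists n : nat, hnorm (x - d n) < e.

Definition orthonormal_basis (v : nat -> V) : Prop :=
  (forall i j : nat, ip (v i) (v j) = (i == j)%:R) /\
  (forall (x : V) (e : R), 0 < e -> exists (n : nat) (a : nat -> R[i]),
      hnorm (x - \sum_(j < n) a j *: v j) < e).

Definition span_first (N : nat) (v : nat -> V) (x : V) : Prop :=
  exists a : 'I_N -> R[i], x = \sum_(j < N) a j *: v j.

Definition orth_projection (S : V -> Prop) (P : V -> V) : Prop :=
  (forall x : V, S (P x)) /\
  (forall x y : V, S y -> ip (x - P x) y = 0).

Definition riesz_constants (u : nat -> V) (A B : R) : Prop :=
  [/\ 0 < A, A <= B,
      (forall f : V,
          ((A * hnorm f ^+ 2)%:E <=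
             \sum_(0 <= j <oo) ((ComplexField.Normc.normc (ip f (u j)) ^+ 2)%:E))%E /\
          (\sum_(0 <= j <oo) ((ComplexField.Normc.normc (ip f (u j)) ^+ 2)%:E) <=
             (B * hnorm f ^+ 2)%:E)%E) &
      (forall (n : nat) (a : nat -> R[i]),
          A * (\sum_(j < n) ComplexField.Normc.normc (a j) ^+ 2)
            <= hnorm (\sum_(j < n) a j *: u j) ^+ 2 /\
          hnorm (\sum_(j < n) a j *: u j) ^+ 2
            <= B * (\sum_(j < n) ComplexField.Normc.normc (a j) ^+ 2))].

Definition riesz_basis (u : nat -> V) : Prop :=
  exists A B : R, riesz_constants u A B.

Definition optimal_riesz_constants (u : nat -> V) (A B : R) : Prop :=
  riesz_constants u A B /\
  (forall A' B' : R, riesz_constants u A' B' -> A' <= A /\ B <= B').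

End Hilbert.

Section Cn.
Context {R : realType} {N : nat}.

Definition cvnorm (c : 'cV[R[i]]_N) : R :=
  Num.sqrt (\sum_(i < N) ComplexField.Normc.normc (c i ord0) ^+ 2).

Definition mx_form (U : 'M[R[i]]_N) (c : 'cV[R[i]]_N) : R[i] :=
  \sum_(i < N) (U *m c) i ord0 * conjc (c i ord0).

Definition Bfun (U : 'M[R[i]]_N) (c : 'cV[R[i]]_N) : R[i] :=
  mx_form U c + 1 - ((cvnorm c ^+ 2)%:C)%C.

Definition is_max_on_ball (U : 'M[R[i]]_N) (M : R) : Prop :=
  (exists2 c, cvnorm c <= 1 & Bfun U c = (M%:C)%C) /\
  (forall c, cvnorm c <= 1 -> Bfun U c <= (M%:C)%C).

Definition is_min_on_ball (U : 'M[R[i]]_N) (m : R) : Prop :=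
  (exists2 c, cvnorm c <= 1 & Bfun U c = (m%:C)%C) /\
  (forall c, cvnorm c <= 1 -> (m%:C)%C <= Bfun U c).

Definition is_max_eigenvalue (U : 'M[R[i]]_N) (L : R) : Prop :=
  eigenvalue U (L%:C)%C /\ (forall a, eigenvalue U a -> a <= (L%:C)%C).

Definition is_min_eigenvalue (U : 'M[R[i]]_N) (l : R) : Prop :=
  eigenvalue U (l%:C)%C /\ (forall a, eigenvalue U a -> (l%:C)%C <= a).

End Cn.

From mathcomp Require Import all_boot all_algebra.
From mathcomp Require Import all_classical all_reals all_analysis.
From mathcomp Require Import complex.
From mathcomp Require Import ring lra.
Import order.Order.TTheory GRing.Theory Num.Theory.
Local Open Scope ring_scope.
Set Implicit Arguments. Unset Strict Implicit. Unset Printing Implicit Defensive.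

(** Write g_k = p'_N(w_k), so that U'_N is the Gram matrix of the basis g_k of
   H'_N.  The tail v_j (j > N) is orthonormal and orthogonal to H'_N, hence both
   sides of the Riesz inequalities split orthogonally:
     |sum_j a_j b_j|^2 = |sum_{k<=N} a_k g_k|^2 + sum_{j>N} |a_j|^2,
     sum_j |<f, b_j>|^2 = sum_k |<p f, g_k>|^2 + |f - p f|^2.
   If y = sum_k a_k g_k and c is the conjugate of (a_k), then |y|^2 = c* U c and
   sum_k |<y, g_k>|^2 = |U c|^2, so the spectral theorem bounds the H'_N parts:
   lambda |c|^2 <= c* U c <= Lambda |c|^2 and lambda c* U c <= |U c|^2 <= Lambda c* U c.
   As |g_k| <= 1 forces lambda <= 1, the numbers lambda and max(Lambda, 1) are Riesz
   constants; unit eigenvectors for lambda and Lambda, and the vector v_{N+1},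
   show that they are optimal.  The same Rayleigh bounds locate the extrema of
   c* U c + 1 - |c|^2 on the unit ball. *)

Local Notation normc := (@ComplexField.Normc.normc _).

Lemma normc_sqrC (R : realType) (z : R[i]) : ((normc z ^+ 2)%:C)%C = z * z^*.
Proof. by rewrite rmorphXn /=; exact: normCK. Qed.

Lemma sum_normc_sqrC (R : realType) (I : Type) (r : seq I) (P : pred I) (F : I -> R[i]) :
  ((\sum_(i <- r | P i) normc (F i) ^+ 2)%:C)%C = \sum_(i <- r | P i) F i * (F i)^*.
Proof. by rewrite rmorph_sum; apply: eq_bigr => i _; exact: normc_sqrC. Qed.

Lemma sum_delta_normc (R : realType) n (k0 : 'I_n) :
  \sum_k normc (if k == k0 then 1 else 0 : R[i]) ^+ 2 = 1.
Proof.
rewrite (bigD1 k0) // big1 => [|k /negbTE ->]; last first.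
  by rewrite ComplexField.Normc.normc0 expr0n.
by rewrite eqxx ComplexField.Normc.normc1 expr1n /= addr0.
Qed.

Lemma sum_delta_scale (R : realType) (V : lmodType R[i]) n (k0 : 'I_n) (u : 'I_n -> V) :
  \sum_k (if k == k0 then 1 else 0 : R[i]) *: u k = u k0.
Proof.
rewrite (bigD1 k0) // big1 => [|k /negbTE ->]; last by rewrite scale0r.
by rewrite eqxx scale1r /= addr0.
Qed.

Lemma nneseries_squeeze (R : realType) (u : nat -> R) (L : R) :
  (forall j, 0 <= u j) ->
  (forall n, \sum_(0 <= j < n) u j <= L) ->
  (forall e, 0 < e -> exists n, L - e <= \sum_(0 <= j < n) u j) ->
  (\sum_(0 <= j <oo) (u j)%:E = L%:E)%E.
Proof.
move=> u_ge0 le_L near_L; apply/eqP; rewrite eq_le; apply/andP; split.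
  apply: lime_le; first by apply: is_cvg_nneseries => n _ _; rewrite lee_fin.
  by apply: nearW => n /=; rewrite sumEFin lee_fin.
apply/lee_addgt0Pr => e e_gt0; have [n Ln] := near_L e e_gt0.
apply: (@le_trans _ _ ((\sum_(0 <= j < n) u j)%:E + e%:E)%E).
  by rewrite -EFinD lee_fin -lerBlDr.
rewrite leeD2r // -sumEFin.
by apply: nneseries_lim_ge => k _ _; rewrite lee_fin.
Qed.

Lemma big_ord_ltn_swap (M : nmodType) (F : nat -> M) (n N : nat) :
  \sum_(j < n) (if (j < N)%N then F j else 0) = \sum_(k < N) (if (k < n)%N then F k else 0).
Proof.
rewrite (big_ord_widen (n + N) (fun j => if (j < N)%N then F j else 0) (leq_addr N n)).
rewrite (big_ord_widen (n + N) (fun k => if (k < n)%N then F k else 0) (leq_addl n N)).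
rewrite big_mkcond [RHS]big_mkcond; apply: eq_bigr => j _.
by case: (j < n)%N; case: (j < N)%N.
Qed.

Lemma big_ord_split_lt (M : nmodType) (F : nat -> M) (n N : nat) :
  \sum_(j < n) F j = \sum_(k < N) (if (k < n)%N then F k else 0)
                     + \sum_(j < n) (if (j < N)%N then 0 else F j).
Proof.
rewrite -big_ord_ltn_swap -big_split; apply: eq_bigr => j _.
by case: ifP => _ /=; rewrite ?addr0 ?add0r.
Qed.

Section InnerProduct.
Variables (R : realType) (V : lmodType R[i]) (ip : V -> V -> R[i]).
Hypothesis ipA : inner_product_axioms ip.

Lemma ipC x y : ip y x = (ip x y)^*.
Proof. by case: ipA => _ ->. Qed.

Lemma ip0l z : ip 0 z = 0.
Proof.
case: ipA => lin _ _ _; have := lin 1 0 0 z; rewrite scaler0 addr0 mul1r.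
by move=> h; apply: (addrI (ip 0 z)); rewrite addr0 -h.
Qed.

Lemma ipDl x y z : ip (x + y) z = ip x z + ip y z.
Proof. by case: ipA => lin _ _ _; rewrite -[x]scale1r lin mul1r scale1r. Qed.

Lemma ipZl a x z : ip (a *: x) z = a * ip x z.
Proof. by case: ipA => lin _ _ _; rewrite -[_ *: x]addr0 lin ip0l addr0. Qed.

Lemma ipBl x y z : ip (x - y) z = ip x z - ip y z.
Proof. by rewrite ipDl -scaleN1r ipZl mulN1r. Qed.

Lemma ip0r z : ip z 0 = 0.
Proof. by rewrite ipC ip0l conjC0. Qed.

Lemma ipDr x y z : ip z (x + y) = ip z x + ip z y.
Proof. by rewrite ipC ipDl rmorphD /= -!(ipC _ z). Qed.

Lemma ipZr a x z : ip z (a *: x) = a^* * ip z x.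
Proof. by rewrite ipC ipZl rmorphM /= -(ipC _ z). Qed.

Lemma ipBr x y z : ip z (x - y) = ip z x - ip z y.
Proof. by rewrite ipC ipBl rmorphB /= -!(ipC _ z). Qed.

Lemma ip_suml I (r : seq I) (P : pred I) (F : I -> V) z :
  ip (\sum_(i <- r | P i) F i) z = \sum_(i <- r | P i) ip (F i) z.
Proof. exact: (big_morph (ip^~ z) (fun x y => ipDl x y z) (ip0l z)). Qed.

Lemma ip_sumr I (r : seq I) (P : pred I) (F : I -> V) z :
  ip z (\sum_(i <- r | P i) F i) = \sum_(i <- r | P i) ip z (F i).
Proof. exact: (big_morph (ip z) (fun x y => ipDr x y z) (ip0r z)). Qed.

Lemma ip_ge0 x : 0 <= ip x x.
Proof. by case: ipA. Qed.

Lemma ip_eq0 x : ip x x = 0 -> x = 0.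
Proof. by case: ipA => _ _ _; apply. Qed.

Lemma hnorm_sqrC x : ((hnorm ip x ^+ 2)%:C)%C = ip x x.
Proof.
have := ip_ge0 x; rewrite /hnorm; case: (ip x x) => a b.
rewrite lecE /= => /andP[/eqP -> a_ge0].
by rewrite sqr_sqrtr.
Qed.

Lemma hnorm0 : hnorm ip 0 = 0.
Proof. by rewrite /hnorm ip0l /= sqrtr0. Qed.

Lemma hnormD_sqr_orth x y : ip x y = 0 ->
  hnorm ip (x + y) ^+ 2 = hnorm ip x ^+ 2 + hnorm ip y ^+ 2.
Proof.
move=> xy; apply: (@complexI R); rewrite rmorphD /= !hnorm_sqrC.
by rewrite ipDl !ipDr xy (ipC x y) xy conjC0 addr0 add0r.
Qed.

Lemma hnorm_proj_sqr (S : V -> Prop) (p : V -> V) : orth_projection ip S p ->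
  forall f, hnorm ip f ^+ 2 = hnorm ip (p f) ^+ 2 + hnorm ip (f - p f) ^+ 2.
Proof.
move=> [pS pO] f; have fE : f = p f + (f - p f) by rewrite addrC subrK.
by rewrite {1}fE hnormD_sqr_orth // ipC pO ?conjC0.
Qed.

End InnerProduct.

Lemma span_first_v (R : realType) (V : lmodType R[i]) (v : nat -> V) N j :
  (j < N)%N -> span_first N v (v j).
Proof.
move=> jN; exists (fun k => ((k : nat) == j)%:R).
rewrite (bigD1 (Ordinal jN)) //= eqxx scale1r big1 ?addr0 // => k kj.
by case: eqP => [k_j|]; rewrite ?scale0r //; case/eqP: kj; apply: val_inj.
Qed.

Section Orthonormal.
Variables (R : realType) (V : lmodType R[i]) (ip : V -> V -> R[i]).
Hypothesis ipA : inner_product_axioms ip.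
Variable v : nat -> V.
Hypothesis v_orthonormal : forall i j : nat, ip (v i) (v j) = (i == j)%:R.

Lemma ip_sum_v (a : nat -> R[i]) n k :
  ip (\sum_(j < n) a j *: v j) (v k) = if (k < n)%N then a k else 0.
Proof.
elim: n => [|n IH]; first by rewrite big_ord0 (ip0l ipA).
rewrite big_ord_recr /= (ipDl ipA) IH (ipZl ipA) v_orthonormal.
case: (ltngtP k n) => [kn|nk|->].
- by rewrite ltnS (ltnW kn) mulr0 addr0.
- by rewrite ltnS leqNgt nk /= mulr0 addr0.
- by rewrite ltnSn mulr1 add0r.
Qed.

Lemma ip_sum_v_sum_v (a : nat -> R[i]) n :
  ip (\sum_(j < n) a j *: v j) (\sum_(j < n) a j *: v j) = \sum_(j < n) a j * (a j)^*.
Proof.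
rewrite (ip_sumr ipA); apply: eq_bigr => j _.
by rewrite (ipZr ipA) ip_sum_v ltn_ord mulrC.
Qed.

Lemma hnorm_sum_v_sqr (a : nat -> R[i]) n :
  hnorm ip (\sum_(j < n) a j *: v j) ^+ 2 = \sum_(j < n) normc (a j) ^+ 2.
Proof.
by apply: (@complexI R); rewrite (hnorm_sqrC ipA) sum_normc_sqrC ip_sum_v_sum_v.
Qed.

Lemma ip_sub_sum_v h (a : nat -> R[i]) n :
  ip (h - \sum_(j < n) a j *: v j) (h - \sum_(j < n) a j *: v j) = ip h h +
    \sum_(j < n) ((a j - ip h (v j)) * (a j - ip h (v j))^* - ip h (v j) * (ip h (v j))^*).
Proof.
set s := \sum_(j < n) a j *: v j; rewrite (ipBl ipA) !(ipBr ipA).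
have -> : ip h s = \sum_(j < n) (a j)^* * ip h (v j).
  by rewrite (ip_sumr ipA); apply: eq_bigr => j _; rewrite (ipZr ipA).
have -> : ip s h = \sum_(j < n) a j * (ip h (v j))^*.
  by rewrite (ip_suml ipA); apply: eq_bigr => j _; rewrite (ipZl ipA) (ipC ipA h).
rewrite ip_sum_v_sum_v -addrA; congr (_ + _).
rewrite -sumrB -sumrN -sumrB; apply: eq_bigr => j _.
by rewrite rmorphB /=; ring.
Qed.

Lemma bessel h n : \sum_(j < n) normc (ip h (v j)) ^+ 2 <= hnorm ip h ^+ 2.
Proof.
rewrite -lecR sum_normc_sqrC (hnorm_sqrC ipA).
have := ip_ge0 ipA (h - \sum_(j < n) ip h (v j) *: v j).
rewrite (ip_sub_sum_v h (fun j => ip h (v j))); under eq_bigr do rewrite subrr mul0r sub0r.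
by rewrite sumrN subr_ge0.
Qed.

Lemma bessel_defect_le h (a : nat -> R[i]) n :
  hnorm ip h ^+ 2 - \sum_(j < n) normc (ip h (v j)) ^+ 2
  <= hnorm ip (h - \sum_(j < n) a j *: v j) ^+ 2.
Proof.
rewrite -lecR rmorphB /= sum_normc_sqrC !(hnorm_sqrC ipA) ip_sub_sum_v sumrB addrA.
by rewrite lerD2r lerDl; apply: sumr_ge0 => j _; apply: mul_conjC_ge0.
Qed.

Lemma parseval_approx h :
  (forall e : R, 0 < e -> exists (n : nat) (a : nat -> R[i]),
      hnorm ip (h - \sum_(j < n) a j *: v j) < e) ->
  forall e : R, 0 < e ->
    exists n, hnorm ip h ^+ 2 - e <= \sum_(j < n) normc (ip h (v j)) ^+ 2.
Proof.
move=> h_approx e e_gt0; have [n [a ha]] := h_approx (Num.sqrt e) (etrans (sqrtr_gt0 e) e_gt0).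
have ha2 : hnorm ip (h - \sum_(j < n) a j *: v j) ^+ 2 < e.
  by rewrite -(sqr_sqrtr (ltW e_gt0)) ltr_pXn2r ?nnegrE ?sqrtr_ge0.
exists n; rewrite lerBlDr addrC -lerBlDr.
exact: le_trans (bessel_defect_le h a n) (ltW ha2).
Qed.

Lemma span_first_ip_v N y j : span_first N v y -> (N <= j)%N -> ip y (v j) = 0.
Proof.
move=> [a ->] Nj; rewrite (ip_suml ipA) big1 // => k _.
by rewrite (ipZl ipA) v_orthonormal ltn_eqF ?mulr0 // (leq_trans (ltn_ord k) Nj).
Qed.

End Orthonormal.

Local Open Scope sesquilinear_scope.

Definition cvsqnorm (R : realType) (N : nat) (c : 'cV[R[i]]_N) : R[i] := (c^t* *m c) 0 0.

Definition qform (R : realType) (N : nat) (U : 'M[R[i]]_N) (c : 'cV[R[i]]_N) : R[i] :=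
  (c^t* *m U *m c) 0 0.

Section ColumnVectors.
Variables (R : realType) (N : nat).
Implicit Types (c : 'cV[R[i]]_N) (U : 'M[R[i]]_N).

Lemma cvsqnorm_sum c : cvsqnorm c = \sum_k c k 0 * (c k 0)^*.
Proof. by rewrite /cvsqnorm mxE; apply: eq_bigr => k _; rewrite !mxE mulrC. Qed.

Lemma cvnorm_sqrC c : ((cvnorm c ^+ 2)%:C)%C = cvsqnorm c.
Proof.
rewrite /cvnorm sqr_sqrtr; last by apply: sumr_ge0 => i _; apply: sqr_ge0.
by rewrite sum_normc_sqrC cvsqnorm_sum.
Qed.

Lemma cvsqnorm_gt0 c : c != 0 -> 0 < cvsqnorm c.
Proof.
move=> c_neq0; rewrite cvsqnorm_sum lt_def sumr_ge0 ?andbT => [|k _]; last first.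
  exact: mul_conjC_ge0.
apply: contra c_neq0 => /eqP c_eq0; apply/eqP/matrixP => k j; rewrite ord1 mxE.
apply/eqP; rewrite -mul_conjC_eq0; apply/eqP.
by apply: (psumr_eq0P _ c_eq0) => // i _; apply: mul_conjC_ge0.
Qed.

Lemma cvnorm_ge0 c : 0 <= cvnorm c.
Proof. exact: sqrtr_ge0. Qed.

Lemma cvsqnorm_col_conj (b : 'I_N -> R[i]) :
  cvsqnorm (\col_k (b k)^*) = \sum_k b k * (b k)^*.
Proof. by rewrite cvsqnorm_sum; apply: eq_bigr => k _; rewrite mxE conjCK mulrC. Qed.

Lemma cvnorm_col_conj_sqr (b : 'I_N -> R[i]) :
  cvnorm (\col_k (b k)^*) ^+ 2 = \sum_k normc (b k) ^+ 2.
Proof. by apply: (@complexI R); rewrite cvnorm_sqrC cvsqnorm_col_conj sum_normc_sqrC. Qed.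

Lemma col_conjK c : \col_k ((c k 0)^*)^* = c.
Proof. by apply/matrixP => k j; rewrite ord1 mxE conjCK. Qed.

Lemma mx_formE U c : mx_form U c = qform U c.
Proof. by rewrite /mx_form /qform -mulmxA mxE; apply: eq_bigr => i _; rewrite !mxE mulrC. Qed.

Lemma eigenvalue_qform U a : eigenvalue U a ->
  exists2 c, c != 0 & qform U c = a * cvsqnorm c.
Proof.
move/eigenvalueP => [x xU x_neq0]; exists (x^t*).
  by apply: contra x_neq0 => /eqP x0; rewrite -[x]trmxCK x0 linear0 map_mx0.
by rewrite /qform /cvsqnorm trmxCK xU -scalemxAl mxE.
Qed.

End ColumnVectors.

Section HermitianSpectrum.
Variables (R : realType) (N : nat) (U : 'M[R[i]]_N).
Hypotheses (N_gt0 : (0 < N)%N) (U_herm : U^t* = U).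
Hypothesis U_posdef : forall c : 'cV[R[i]]_N, c != 0 -> 0 < qform U c.

Local Notation W := (spectralmx U).
Local Notation d := (spectral_diag U).

Let WWt : W *m W^t* = 1%:M.
Proof. exact/unitarymxP/spectral_unitarymx. Qed.

Let WtW : W^t* *m W = 1%:M.
Proof. by rewrite -invmx_unitary ?spectral_unitarymx // mulVmx ?spectral_unit. Qed.

Let U_diag : U = W^t* *m diag_mx d *m W.
Proof.
rewrite -invmx_unitary ?spectral_unitarymx //; apply/orthomx_spectralP/normalmxP.
by rewrite U_herm.
Qed.

Let trmxC_mul m n p (A : 'M[R[i]]_(m, n)) (B : 'M[R[i]]_(n, p)) :
  (A *m B)^t* = B^t* *m A^t*.
Proof. by rewrite trmx_mul map_mxM. Qed.

Lemma qform_spectral c : qform U c = \sum_k d 0 k * ((W *m c) k 0 * ((W *m c) k 0)^*).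
Proof.
rewrite /qform [in LHS]U_diag -!mulmxA !mulmxA -trmxC_mul -mulmxA mul_mx_diag mxE.
by apply: eq_bigr => k _; rewrite !mxE; ring.
Qed.

Lemma cvsqnorm_spectral c : cvsqnorm c = cvsqnorm (W *m c).
Proof. by rewrite /cvsqnorm trmxC_mul -mulmxA (mulmxA (W^t*)) WtW mul1mx. Qed.

Lemma cvsqnorm_mulmx_spectral c :
  cvsqnorm (U *m c) = \sum_k (d 0 k * (d 0 k)^*) * ((W *m c) k 0 * ((W *m c) k 0)^*).
Proof.
have -> : U *m c = W^t* *m (diag_mx d *m (W *m c)) by rewrite [in LHS]U_diag !mulmxA.
rewrite /cvsqnorm trmxC_mul trmxCK -mulmxA (mulmxA W) WWt mul1mx.
rewrite -/(cvsqnorm _) cvsqnorm_sum; apply: eq_bigr => k _.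
by rewrite mul_diag_mx !mxE rmorphM /= mulrACA.
Qed.

Let e k : 'cV[R[i]]_N := delta_mx k 0.
Let eigvec k : 'cV[R[i]]_N := W^t* *m e k.

Let W_eigvec k : W *m eigvec k = e k.
Proof. by rewrite mulmxA WWt mul1mx. Qed.

Let sum_delta k (F : 'I_N -> R[i] -> R[i]) : (forall j, F j 0 = 0) ->
  \sum_j F j (e k j 0) = F k 1.
Proof.
move=> F0; rewrite (bigD1 k) //= big1 ?addr0; first by rewrite mxE !eqxx.
by move=> j jk; rewrite mxE (negbTE jk) /= F0.
Qed.

Let eigvec_neq0 k : eigvec k != 0.
Proof.
apply/negP => /eqP v0; have := W_eigvec k; rewrite v0 mulmx0 => /matrixP/(_ k 0).
by rewrite !mxE !eqxx /= => /eqP; rewrite eq_sym oner_eq0.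
Qed.

Let qform_eigvec k : qform U (eigvec k) = d 0 k.
Proof.
rewrite qform_spectral W_eigvec (@sum_delta k (fun j x => d 0 j * (x * x^*))).
  by rewrite conjC1 !mulr1.
by move=> j; rewrite mul0r mulr0.
Qed.

Let cvsqnorm_eigvec k : cvsqnorm (eigvec k) = 1.
Proof.
rewrite cvsqnorm_spectral W_eigvec cvsqnorm_sum.
by rewrite (@sum_delta k (fun _ x => x * x^*)) ?conjC1 ?mulr1 // => j; rewrite mul0r.
Qed.

Let d_gt0 k : 0 < d 0 k.
Proof. by rewrite -qform_eigvec U_posdef ?eigvec_neq0. Qed.

Let dE k : d 0 k = ((complex.Re (d 0 k))%:C)%C.
Proof. by have := ger0_Im (ltW (d_gt0 k)); case: (d 0 k) => a b /= ->. Qed.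

Let eigenvalue_d k : eigenvalue U (d 0 k).
Proof.
apply/eigenvalueP; exists (delta_mx 0 k *m W).
  rewrite [X in _ *m X = _]U_diag !mulmxA -(mulmxA _ W) WWt mulmx1 scalemxAl; congr (_ *m W).
  apply/matrixP => i j; rewrite mul_mx_diag !mxE ord1 eqxx /=.
  by case: eqP => [->|_]; rewrite ?mulr0 ?mul0r // mulrC.
rewrite mulmx_free_eq0 ?row_free_unit ?spectral_unit //.
by apply/negP => /eqP/matrixP/(_ 0 k); rewrite !mxE !eqxx => /eqP; rewrite oner_eq0.
Qed.

Let kmin := preorder.Order.arg_min (Ordinal N_gt0) xpredT (fun k => complex.Re (d 0 k)).
Let kmax := preorder.Order.arg_max (Ordinal N_gt0) xpredT (fun k => complex.Re (d 0 k)).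

Definition eigval_min := complex.Re (d 0 kmin).
Definition eigval_max := complex.Re (d 0 kmax).

Let eigval_min_le k : eigval_min <= complex.Re (d 0 k).
Proof. by rewrite /eigval_min /kmin; case: arg_minP => // i _; apply. Qed.

Let le_eigval_max k : complex.Re (d 0 k) <= eigval_max.
Proof. by rewrite /eigval_max /kmax; case: arg_maxP => // i _; apply. Qed.

Let Re_d_gt0 k : 0 < complex.Re (d 0 k).
Proof. by rewrite -ltcR -dE. Qed.

Lemma eigval_min_gt0 : 0 < eigval_min.
Proof. exact: Re_d_gt0. Qed.

Lemma qform_ge c : (eigval_min%:C)%C * cvsqnorm c <= qform U c.
Proof.
rewrite qform_spectral cvsqnorm_spectral cvsqnorm_sum mulr_sumr.
by apply: ler_sum => k _; apply: ler_wpM2r; rewrite ?mul_conjC_ge0 // dE lecR.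
Qed.

Lemma qform_le c : qform U c <= (eigval_max%:C)%C * cvsqnorm c.
Proof.
rewrite qform_spectral cvsqnorm_spectral cvsqnorm_sum mulr_sumr.
by apply: ler_sum => k _; apply: ler_wpM2r; rewrite ?mul_conjC_ge0 // dE lecR.
Qed.

Lemma cvsqnorm_mulmx_ge c : (eigval_min%:C)%C * qform U c <= cvsqnorm (U *m c).
Proof.
rewrite qform_spectral cvsqnorm_mulmx_spectral mulr_sumr.
apply: ler_sum => k _; rewrite mulrA; apply: ler_wpM2r; rewrite ?mul_conjC_ge0 //.
rewrite geC0_conj ?(ltW (d_gt0 k)) // dE -!rmorphM /= lecR.
by apply: ler_wpM2r; [exact: ltW | exact: eigval_min_le].
Qed.

Lemma cvsqnorm_mulmx_le c : cvsqnorm (U *m c) <= (eigval_max%:C)%C * qform U c.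
Proof.
rewrite qform_spectral cvsqnorm_mulmx_spectral mulr_sumr.
apply: ler_sum => k _; rewrite [X in _ <= X]mulrA; apply: ler_wpM2r; rewrite ?mul_conjC_ge0 //.
rewrite geC0_conj ?(ltW (d_gt0 k)) // dE -!rmorphM /= lecR.
by apply: ler_wpM2r; [exact: ltW | exact: le_eigval_max].
Qed.

Lemma qform_eigval_min : exists2 c, cvsqnorm c = 1 & qform U c = (eigval_min%:C)%C.
Proof. by exists (eigvec kmin); rewrite ?cvsqnorm_eigvec // qform_eigvec -dE. Qed.

Lemma qform_eigval_max : exists2 c, cvsqnorm c = 1 & qform U c = (eigval_max%:C)%C.
Proof. by exists (eigvec kmax); rewrite ?cvsqnorm_eigvec // qform_eigvec -dE. Qed.

Lemma eigval_minP : is_min_eigenvalue U eigval_min.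
Proof.
split; first by rewrite /eigval_min -dE eigenvalue_d.
move=> a /eigenvalue_qform[c /cvsqnorm_gt0 c_gt0 qc].
by have := qform_ge c; rewrite qc ler_pM2r.
Qed.

Lemma eigval_maxP : is_max_eigenvalue U eigval_max.
Proof.
split; first by rewrite /eigval_max -dE eigenvalue_d.
move=> a /eigenvalue_qform[c /cvsqnorm_gt0 c_gt0 qc].
by have := qform_le c; rewrite qc ler_pM2r.
Qed.

End HermitianSpectrum.

Lemma is_min_eigenvalue_unique (R : realType) (N : nat) (U : 'M[R[i]]_N) l l' :
  is_min_eigenvalue U l -> is_min_eigenvalue U l' -> l = l'.
Proof.
move=> [el hl] [el' hl']; apply: le_anti; apply/andP.
by split; rewrite -lecR; [exact: hl el' | exact: hl' el].
Qed.

Lemma is_max_eigenvalue_unique (R : realType) (N : nat) (U : 'M[R[i]]_N) L L' :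
  is_max_eigenvalue U L -> is_max_eigenvalue U L' -> L = L'.
Proof.
move=> [eL hL] [eL' hL']; apply: le_anti; apply/andP.
by split; rewrite -lecR; [exact: hL' eL | exact: hL eL'].
Qed.


Section Gram.
Variables (R : realType) (V : lmodType R[i]) (ip : V -> V -> R[i]).
Hypothesis ipA : inner_product_axioms ip.
Variables (N : nat) (g : 'I_N -> V).

Definition gram : 'M[R[i]]_N := \matrix_(i, j) ip (g i) (g j).

Lemma gram_herm : gram^t* = gram.
Proof. by apply/matrixP => i j; rewrite !mxE -(ipC ipA). Qed.

Lemma qform_gram (b : 'I_N -> R[i]) :
  qform gram (\col_k (b k)^*) = ip (\sum_k b k *: g k) (\sum_k b k *: g k).
Proof.
rewrite /qform mxE (ip_suml ipA).
under eq_bigr => j _ do rewrite mxE big_distrl /=.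
rewrite exchange_big /=; apply: eq_bigr => i _.
rewrite (ipZl ipA) (ip_sumr ipA) mulr_sumr; apply: eq_bigr => j _.
by rewrite (ipZr ipA) !mxE conjCK; ring.
Qed.

Lemma cvsqnorm_gram_mulmx (b : 'I_N -> R[i]) (y := \sum_k b k *: g k) :
  cvsqnorm (gram *m \col_k (b k)^*) = \sum_i ip y (g i) * (ip y (g i))^*.
Proof.
rewrite cvsqnorm_sum; apply: eq_bigr => i _.
have -> : (gram *m \col_k (b k)^*) i 0 = (ip y (g i))^*.
  rewrite mxE -(ipC ipA) (ip_sumr ipA); apply: eq_bigr => k _.
  by rewrite !mxE (ipZr ipA) mulrC.
by rewrite conjCK mulrC.
Qed.

Hypothesis g_free : forall b : 'I_N -> R[i], \sum_k b k *: g k = 0 -> forall k, b k = 0.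

Lemma gram_posdef (c : 'cV[R[i]]_N) : c != 0 -> 0 < qform gram c.
Proof.
move=> c_neq0; rewrite -[c]col_conjK qform_gram lt_def (ip_ge0 ipA) andbT.
apply: contra c_neq0 => /eqP/(ip_eq0 ipA)/g_free c0; apply/eqP/matrixP => k j.
by rewrite ord1 !mxE -[c k 0]conjCK c0 conjC0.
Qed.

Hypothesis N_gt0 : (0 < N)%N.

Local Notation lam := (eigval_min gram N_gt0).
Local Notation Lam := (eigval_max gram N_gt0).

Lemma gram_rayleigh (b : 'I_N -> R[i]) (y := \sum_k b k *: g k) :
  lam * \sum_k normc (b k) ^+ 2 <= hnorm ip y ^+ 2
  /\ hnorm ip y ^+ 2 <= Lam * \sum_k normc (b k) ^+ 2.
Proof.
have := qform_ge N_gt0 gram_herm gram_posdef (\col_k (b k)^*).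
have := qform_le N_gt0 gram_herm gram_posdef (\col_k (b k)^*).
rewrite qform_gram cvsqnorm_col_conj -sum_normc_sqrC -(hnorm_sqrC ipA) -!rmorphM /=.
by rewrite !lecR.
Qed.

Lemma gram_coef_bounds (b : 'I_N -> R[i]) (y := \sum_k b k *: g k) :
  lam * hnorm ip y ^+ 2 <= \sum_i normc (ip y (g i)) ^+ 2
  /\ \sum_i normc (ip y (g i)) ^+ 2 <= Lam * hnorm ip y ^+ 2.
Proof.
have := cvsqnorm_mulmx_ge N_gt0 gram_herm gram_posdef (\col_k (b k)^*).
have := cvsqnorm_mulmx_le N_gt0 gram_herm gram_posdef (\col_k (b k)^*).
rewrite qform_gram cvsqnorm_gram_mulmx -sum_normc_sqrC -(hnorm_sqrC ipA) -!rmorphM /=.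
by rewrite !lecR.
Qed.

Let unit_coef (c : 'cV[R[i]]_N) (b := fun k => (c k 0)^*) :
  cvsqnorm c = 1 -> \sum_k normc (b k) ^+ 2 = 1.
Proof.
by move=> c1; apply: (@complexI R); rewrite sum_normc_sqrC -cvsqnorm_col_conj col_conjK c1.
Qed.

Lemma gram_eigval_min_attained :
  exists b : 'I_N -> R[i],
    \sum_k normc (b k) ^+ 2 = 1 /\ hnorm ip (\sum_k b k *: g k) ^+ 2 = lam.
Proof.
have [c c1 qc] := qform_eigval_min N_gt0 gram_herm gram_posdef.
exists (fun k => (c k 0)^*); split; first exact: unit_coef.
by apply: (@complexI R); rewrite (hnorm_sqrC ipA) -qform_gram col_conjK.
Qed.

Lemma gram_eigval_max_attained :
  exists b : 'I_N -> R[i],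
    \sum_k normc (b k) ^+ 2 = 1 /\ hnorm ip (\sum_k b k *: g k) ^+ 2 = Lam.
Proof.
have [c c1 qc] := qform_eigval_max N_gt0 gram_herm gram_posdef.
exists (fun k => (c k 0)^*); split; first exact: unit_coef.
by apply: (@complexI R); rewrite (hnorm_sqrC ipA) -qform_gram col_conjK.
Qed.

Lemma Bfun_gram (b : 'I_N -> R[i]) :
  Bfun gram (\col_k (b k)^*) =
  ((hnorm ip (\sum_k b k *: g k) ^+ 2 + 1 - \sum_k normc (b k) ^+ 2)%:C)%C.
Proof.
by rewrite /Bfun mx_formE qform_gram cvnorm_col_conj_sqr rmorphB rmorphD /= (hnorm_sqrC ipA).
Qed.

Hypothesis g_norm_le1 : forall k, hnorm ip (g k) <= 1.

Lemma eigval_min_le1 : lam <= 1.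
Proof.
pose k0 := Ordinal N_gt0.
have [lam_le _] := gram_rayleigh (fun k => if k == k0 then 1 else 0).
rewrite sum_delta_scale sum_delta_normc mulr1 in lam_le.
apply: (le_trans lam_le); apply: exprn_ile1 (g_norm_le1 k0); exact: sqrtr_ge0.
Qed.

Let cvnorm_col_conj_le1 (b : 'I_N -> R[i]) :
  \sum_k normc (b k) ^+ 2 <= 1 -> cvnorm (\col_k (b k)^*) <= 1.
Proof.
move=> b_le1; rewrite -(ler_pXn2r (_ : 0 < 2)%N) ?nnegrE ?cvnorm_ge0 //.
by rewrite cvnorm_col_conj_sqr expr1n.
Qed.

Lemma gram_min_on_ball : is_min_on_ball gram lam.
Proof.
split.
  have [b [b1 yb]] := gram_eigval_min_attained.
  exists (\col_k (b k)^*); first by rewrite cvnorm_col_conj_le1 ?b1.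
  by rewrite Bfun_gram yb b1 addrK.
move=> c c_le1; rewrite -[c]col_conjK Bfun_gram lecR.
have [+ _] := gram_rayleigh (fun k => (c k 0)^*).
have := eigval_min_le1; rewrite -cvnorm_col_conj_sqr col_conjK.
have : cvnorm c ^+ 2 <= 1 by rewrite exprn_ile1 ?cvnorm_ge0.
nra.
Qed.

Lemma gram_max_on_ball : is_max_on_ball gram (Num.max Lam 1).
Proof.
split; last first.
  move=> c c_le1; rewrite -[c]col_conjK Bfun_gram lecR.
  have [_ +] := gram_rayleigh (fun k => (c k 0)^*).
  rewrite -cvnorm_col_conj_sqr col_conjK.
  have : cvnorm c ^+ 2 <= 1 by rewrite exprn_ile1 ?cvnorm_ge0.
  have : Lam <= Num.max Lam 1 by rewrite le_max lexx.
  have : 1 <= Num.max Lam 1 by rewrite le_max lexx orbT.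
  have := sqr_ge0 (cvnorm c).
  nra.
have [Lam_le1|Lam_gt1] := leP Lam 1.
  exists (\col_k (0 : R[i])^*).
    by rewrite cvnorm_col_conj_le1 // big1 // => k _; rewrite ComplexField.Normc.normc0 expr0n.
  rewrite Bfun_gram big1 => [|k _]; last by rewrite scale0r.
  rewrite big1 => [|k _]; last by rewrite ComplexField.Normc.normc0 expr0n.
  by rewrite (hnorm0 ipA) expr0n /= add0r subr0.
have [b [b1 yb]] := gram_eigval_max_attained.
exists (\col_k (b k)^*); first by rewrite cvnorm_col_conj_le1 ?b1.
by rewrite Bfun_gram yb b1 addrK.
Qed.

End Gram.

Lemma riesz_constants_synthesis (R : realType) (V : lmodType R[i]) (ip : V -> V -> R[i])
    (u : nat -> V) (A B : R) :
  riesz_constants ip u A B -> forall n (b : 'I_n -> R[i]),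
  A * \sum_k normc (b k) ^+ 2 <= hnorm ip (\sum_k b k *: u k) ^+ 2
  /\ hnorm ip (\sum_k b k *: u k) ^+ 2 <= B * \sum_k normc (b k) ^+ 2.
Proof.
move=> [_ _ _ synth] n b; pose a j := oapp b 0 (insub j).
have aE (k : 'I_n) : a k = b k by rewrite /a valK.
have -> : \sum_k b k *: u k = \sum_(k < n) a k *: u k by apply: eq_bigr => k _; rewrite aE.
have -> : \sum_k normc (b k) ^+ 2 = \sum_(k < n) normc (a k) ^+ 2.
  by apply: eq_bigr => k _; rewrite aE.
exact: synth.
Qed.

Section RieszBasis.
Variables (R : realType) (V : lmodType R[i]) (ip : V -> V -> R[i]).
Hypothesis ipA : inner_product_axioms ip.
Variables (v w : nat -> V) (N : nat) (p : V -> V).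
Hypothesis v_orthonormal : forall i j : nat, ip (v i) (v j) = (i == j)%:R.
Hypothesis v_total : forall (x : V) (e : R), 0 < e ->
  exists (n : nat) (a : nat -> R[i]), hnorm ip (x - \sum_(j < n) a j *: v j) < e.
Hypothesis w_unit : forall j, hnorm ip (w j) = 1.
Hypothesis N_gt0 : (0 < N)%N.
Hypothesis p_proj : orth_projection ip (span_first N v) p.
Hypothesis pw_free :
  forall b : 'I_N -> R[i], \sum_(k < N) b k *: p (w k) = 0 -> forall k, b k = 0.
Hypothesis pw_span : forall x, span_first N v x ->
  exists b : 'I_N -> R[i], x = \sum_(k < N) b k *: p (w k).

Let g (k : 'I_N) := p (w k).
Let Bt j := if (j < N)%N then p (w j) else v j.
Local Notation lam := (eigval_min (gram ip g) N_gt0).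
Local Notation Lam := (eigval_max (gram ip g) N_gt0).
Local Notation M := (Num.max Lam 1).

Let Lam_le_M : Lam <= M. Proof. by rewrite le_max lexx. Qed.
Let one_le_M : 1 <= M. Proof. by rewrite le_max lexx orbT. Qed.

Let p_span x : span_first N v (p x). Proof. by case: p_proj. Qed.

Lemma proj_norm_le1 k : hnorm ip (g k) <= 1.
Proof.
have := hnorm_proj_sqr ipA p_proj (w k); rewrite w_unit expr1n => w_split.
rewrite -(ler_pXn2r (_ : 0 < 2)%N) ?nnegrE ?sqrtr_ge0 // expr1n w_split.
by rewrite lerDl sqr_ge0.
Qed.

Let lam_le1 : lam <= 1.
Proof. exact: (eigval_min_le1 (g := g) ipA pw_free N_gt0 proj_norm_le1). Qed.

Let ip_sum_g_v (b : 'I_N -> R[i]) j : (N <= j)%N -> ip (\sum_k b k *: g k) (v j) = 0.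
Proof.
move=> Nj; rewrite (ip_suml ipA) big1 // => k _.
by rewrite (ipZl ipA) (span_first_ip_v ipA v_orthonormal (p_span _) Nj) mulr0.
Qed.

Lemma hnorm_sum_Bt_sqr n (a : nat -> R[i]) :
  let b k := if (k < n)%N then a k else 0 in
  let e j := if (j < N)%N then 0 else a j in
  hnorm ip (\sum_(j < n) a j *: Bt j) ^+ 2 =
  hnorm ip (\sum_(k < N) b k *: g k) ^+ 2 + \sum_(j < n) normc (e j) ^+ 2.
Proof.
move=> b e; rewrite (big_ord_split_lt (fun j => a j *: Bt j) n N).
have -> : \sum_(k < N) (if (k < n)%N then a k *: Bt k else 0) = \sum_(k < N) b k *: g k.
  by apply: eq_bigr => k _; rewrite /b /Bt ltn_ord; case: (k < n)%N; rewrite ?scale0r.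
have -> : \sum_(j < n) (if (j < N)%N then 0 else a j *: Bt j) = \sum_(j < n) e j *: v j.
  by apply: eq_bigr => j _; rewrite /e /Bt; case: (j < N)%N; rewrite ?scale0r.
rewrite (hnormD_sqr_orth ipA) ?(hnorm_sum_v_sqr ipA v_orthonormal) //.
rewrite (ip_sumr ipA) big1 // => j _; rewrite (ipZr ipA) /e.
by case: ifPn => [_|]; rewrite ?conjC0 ?mul0r // -leqNgt => /ip_sum_g_v ->; rewrite mulr0.
Qed.

Lemma Bt_synthesis_bounds n (a : nat -> R[i]) :
  lam * (\sum_(j < n) normc (a j) ^+ 2) <= hnorm ip (\sum_(j < n) a j *: Bt j) ^+ 2
  /\ hnorm ip (\sum_(j < n) a j *: Bt j) ^+ 2 <= M * (\sum_(j < n) normc (a j) ^+ 2).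
Proof.
rewrite hnorm_sum_Bt_sqr /=.
set b := fun k : nat => if (k < n)%N then a k else 0.
set e := fun j : nat => if (j < N)%N then 0 else a j.
have coef_split : \sum_(j < n) normc (a j) ^+ 2 =
    \sum_(k < N) normc (b k) ^+ 2 + \sum_(j < n) normc (e j) ^+ 2.
  rewrite (big_ord_split_lt (fun j => normc (a j) ^+ 2) n N).
  by congr (_ + _); apply: eq_bigr => j _; rewrite /b /e;
    case: ifP; rewrite ?ComplexField.Normc.normc0 ?expr0n.
have [lo hi] := gram_rayleigh ipA pw_free N_gt0 (fun k => b k).
have : 0 <= \sum_(k < N) normc (b k) ^+ 2 by apply: sumr_ge0 => k _; apply: sqr_ge0.
have : 0 <= \sum_(j < n) normc (e j) ^+ 2 by apply: sumr_ge0 => k _; apply: sqr_ge0.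
have := Lam_le_M; have := one_le_M.
rewrite coef_split; move: lo hi lam_le1; set Y := hnorm ip _ ^+ 2; nra.
Qed.

Lemma normc_ip_Bt_sqr f j :
  normc (ip f (Bt j)) ^+ 2 =
  (if (j < N)%N then normc (ip (p f) (p (w j))) ^+ 2 else 0)
  + normc (ip (f - p f) (v j)) ^+ 2.
Proof.
have [_ p_orth] := p_proj; have fE : f = p f + (f - p f) by rewrite addrC subrK.
rewrite /Bt; case: ltnP => [jN|Nj].
  rewrite p_orth; last exact: span_first_v jN.
  rewrite ComplexField.Normc.normc0 expr0n addr0.
  by rewrite {1}fE (ipDl ipA) p_orth ?addr0.
by rewrite add0r {1}fE (ipDl ipA) (span_first_ip_v ipA v_orthonormal (p_span f) Nj) add0r.
Qed.

Lemma frame_series f :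
  (\sum_(0 <= j <oo) (normc (ip f (Bt j)) ^+ 2)%:E =
   (\sum_k normc (ip (p f) (g k)) ^+ 2 + hnorm ip (f - p f) ^+ 2)%:E)%E.
Proof.
set F := fun j => normc (ip (p f) (p (w j))) ^+ 2.
set G := fun j => normc (ip (f - p f) (v j)) ^+ 2.
have partial n : \sum_(0 <= j < n) normc (ip f (Bt j)) ^+ 2
    = \sum_(k < N) (if (k < n)%N then F k else 0) + \sum_(0 <= j < n) G j.
  rewrite !big_mkord -big_ord_ltn_swap -big_split.
  by apply: eq_bigr => j _; rewrite normc_ip_Bt_sqr.
apply: nneseries_squeeze => [j|n|e e_gt0]; first exact: sqr_ge0.
  rewrite partial big_mkord; apply: lerD; last exact: bessel.
  by apply: ler_sum => k _; case: ifP => _; rewrite ?sqr_ge0.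
have [m Gm] := parseval_approx ipA v_orthonormal (v_total (f - p f)) e_gt0.
exists (m + N)%N; rewrite partial (big_cat_nat _ (leq_addr N m)) //=.
have -> : \sum_(k < N) (if (k < m + N)%N then F k else 0)
          = \sum_k normc (ip (p f) (g k)) ^+ 2.
  by apply: eq_bigr => k _; rewrite (leq_trans (ltn_ord k) (leq_addl m N)).
have : 0 <= \sum_(m <= j < m + N) G j by apply: sumr_ge0 => j _; apply: sqr_ge0.
rewrite big_mkord in Gm *; rewrite /G in Gm *; lra.
Qed.

Lemma Bt_frame_bounds f :
  ((lam * hnorm ip f ^+ 2)%:E <= \sum_(0 <= j <oo) (normc (ip f (Bt j)) ^+ 2)%:E)%E
  /\ (\sum_(0 <= j <oo) (normc (ip f (Bt j)) ^+ 2)%:E <= (M * hnorm ip f ^+ 2)%:E)%E.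
Proof.
rewrite frame_series !lee_fin (hnorm_proj_sqr ipA p_proj f).
have [b pfE] := pw_span (p_span f).
have [lo hi] := gram_coef_bounds ipA pw_free N_gt0 b; rewrite -pfE in lo hi.
have := sqr_ge0 (hnorm ip (p f)); have := sqr_ge0 (hnorm ip (f - p f)).
have := Lam_le_M; have := one_le_M.
move: lam_le1; nra.
Qed.

Lemma Bt_riesz_constants : riesz_constants ip Bt lam M.
Proof.
split; [|exact: le_trans lam_le1 one_le_M|exact: Bt_frame_bounds|exact: Bt_synthesis_bounds].
exact: eigval_min_gt0 N_gt0 (gram_herm ipA g) (gram_posdef ipA pw_free).
Qed.

Lemma Bt_riesz_constants_optimal A B : riesz_constants ip Bt A B -> A <= lam /\ M <= B.
Proof.
move=> AB; have synth := riesz_constants_synthesis AB.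
have Bt_g (b : 'I_N -> R[i]) : \sum_k b k *: Bt k = \sum_k b k *: g k.
  by apply: eq_bigr => k _; rewrite /Bt ltn_ord.
split.
  have [b [b1 yb]] := gram_eigval_min_attained ipA pw_free N_gt0.
  by have [+ _] := synth N b; rewrite Bt_g yb b1 mulr1.
have [b [b1 yb]] := gram_eigval_max_attained ipA pw_free N_gt0.
have [_ +] := synth N b; rewrite Bt_g yb b1 mulr1 => Lam_le.
rewrite ge_max Lam_le /=.
(* the first tail vector [v N] is itself a member of the system *)
have [_ +] := synth N.+1 (fun k => if k == ord_max then 1 else 0).
rewrite sum_delta_scale sum_delta_normc mulr1 /Bt /= ltnn.
suff -> : hnorm ip (v N) ^+ 2 = 1 by [].
by apply: (@complexI R); rewrite (hnorm_sqrC ipA) v_orthonormal eqxx.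
Qed.

End RieszBasis.

Theorem mainTheorem5 (R : realType) (V : lmodType R[i]) (ip : V -> V -> R[i])
  (v w : nat -> V) (N : nat) (p : V -> V) :
  hilbert_space ip -> hseparable ip ->
  orthonormal_basis ip v ->
  (forall j : nat, hnorm ip (w j) = 1) ->
  (1 <= N)%N ->
  orth_projection ip (span_first N v) p ->
  (* {p(w_1), ..., p(w_N)} is a basis of H_N' *)
  (forall a : 'I_N -> R[i], \sum_(i < N) a i *: p (w i) = 0 -> forall i, a i = 0) ->
  (forall x : V, span_first N v x ->
     exists a : 'I_N -> R[i], x = \sum_(i < N) a i *: p (w i)) ->
  let Bt : nat -> V := fun j => if (j < N)%N then p (w j) else v j in
  let U : 'M[R[i]]_N := \matrix_(i < N, j < N) ip (p (w i)) (p (w j)) in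
  riesz_basis ip Bt /\
  exists Btilde Atilde : R,
    [/\ optimal_riesz_constants ip Bt Atilde Btilde,
        is_max_on_ball U Btilde,
        is_min_on_ball U Atilde &
        forall Lam lam : R, is_max_eigenvalue U Lam -> is_min_eigenvalue U lam ->
          Btilde = Num.max Lam 1 /\ Atilde = lam].
Proof.
move=> [ipA _] _ [v_on v_total] w_unit N_gt0 p_proj pw_free pw_span Bt U.
have riesz := Bt_riesz_constants ipA v_on v_total w_unit N_gt0 p_proj pw_free pw_span.
split; first by exists (eigval_min U N_gt0), (Num.max (eigval_max U N_gt0) 1).
exists (Num.max (eigval_max U N_gt0) 1), (eigval_min U N_gt0); split.
- by split => // A B /(Bt_riesz_constants_optimal ipA v_on N_gt0 pw_free).
- exact: (gram_max_on_ball (g := fun k => p (w k)) ipA pw_free N_gt0).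
- exact: (gram_min_on_ball (g := fun k => p (w k)) ipA pw_free N_gt0
    (proj_norm_le1 ipA w_unit p_proj)).
move=> Lam lam max_Lam min_lam.
have U_herm := gram_herm ipA (fun k : 'I_N => p (w k)).
have U_posdef := gram_posdef (g := fun k => p (w k)) ipA pw_free.
split; first congr (Num.max _ 1).
  exact: is_max_eigenvalue_unique (eigval_maxP N_gt0 U_herm U_posdef) max_Lam.
exact: is_min_eigenvalue_unique (eigval_minP N_gt0 U_herm U_posdef) min_lam.
Qed.
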